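(* Let $n \geq 6$ and let $K_n$ be the complete graph on $n$ vertices, viewed as an electrical network in which every edge has conductance $1$. Then the smallest number of measurements needed to solve the faulty edge detection problem on this network is exactly $\left\lceil \frac{2n}{3}\right\rceil$.
   Context: An electrical network is a graph $G=(V,E)$ with nonnegative conductances (edge weights); here all conductances equal $1$. For vertices $r,s$, the effective resistance $R_{rs}$ is the reciprocal of the net current flowing through the network when a unit voltage difference is applied between $r$ and $s$. Faulty edge detection problem: an unknown edge $e^*\in E$ has its conductance changed from $1$ to $0$ (the edge is removed). A measurement is an unordered pair $\{r,s\}$ of vertices (any pair of vertices is allowed), and it reveals the effective resistance between $r$ and $s$ in the altered network. A set $S$ of measurements solves the problem if for every two distinct edges $e\neq e'$ of $G$ there is a pair $\{r,s\}\in S$ such that the effective resistance between $r$ and $s$ in $G$ with $e$ removed differs from that in $G$ with $e'$ removed. The quantity in question is the minimum size of such a set $S$. *)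

From HB Require Import structures.
From mathcomp Require Import all_boot all_order all_algebra.
From Stdlib Require Import ClassicalEpsilon.
Set Implicit Arguments. Unset Strict Implicit. Unset Printing Implicit Defensive.
Import Order.TTheory GRing.Theory Num.Theory.
Local Open Scope ring_scope.

(* An electrical network on vertex set 'I_n with all conductances equal to 1
   is given by its (symmetric, irreflexive) adjacency relation [adj].
   With potential [phi], the current from v to u along an edge is phi v - phi u. *)

Definition is_potential (R : realFieldType) (n : nat) (adj : rel 'I_n)
    (r s : 'I_n) (phi : 'I_n -> R) : Prop :=
  [/\ phi r = 1, phi s = 0 &
      forall v : 'I_n, v != r -> v != s -> \sum_(u | adj v u) (phi v - phi u) = 0].

Definition net_current (R : realFieldType) (n : nat) (adj : rel 'I_n)
    (r : 'I_n) (phi : 'I_n -> R) : R :=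
  \sum_(u | adj r u) (phi r - phi u).

Arguments net_current {R n} adj r phi.
Definition eff_res (R : realFieldType) (n : nat) (adj : rel 'I_n) (r s : 'I_n) : R :=
  if r == s then 0
  else (net_current adj r
          (epsilon (inhabits (fun _ : 'I_n => (0 : R))) (is_potential adj r s)))^-1.

(* Edges of K_n: unordered pairs {u,v}, u <> v, represented as (u,v) with u < v. *)
Definition Kn_edge (n : nat) (e : 'I_n * 'I_n) : bool := (e.1 < e.2)%N.

(* Adjacency of K_n with the edge e removed (conductance set to 0). *)
Definition Kn_minus (n : nat) (e : 'I_n * 'I_n) : rel 'I_n :=
  fun u v => (u != v) && ~~ ((e == (u, v)) || (e == (v, u))).

(* A set of measurements (unordered pairs {r,s}, r <> s, represented as (r,s)
   with r < s) solves the faulty edge detection problem on K_n. *)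
Definition solves (R : realFieldType) (n : nat) (S : {set 'I_n * 'I_n}) : Prop :=
  (forall p, p \in S -> (p.1 < p.2)%N) /\
  forall e e' : 'I_n * 'I_n, Kn_edge e -> Kn_edge e' -> e != e' ->
    exists2 p, p \in S &
      @eff_res R n (Kn_minus e) p.1 p.2 != @eff_res R n (Kn_minus e') p.1 p.2.

From mathcomp Require Import all_boot all_order all_algebra.
From mathcomp Require Import ring lra zify.
From Stdlib Require Import ClassicalEpsilon.
Set Implicit Arguments. Unset Strict Implicit. Unset Printing Implicit Defensive.
Import Order.TTheory GRing.Theory Num.Theory.

(* In K_n minus an edge e, the effective resistance between r and s depends only on
   k = |e ∩ {r, s}|: explicit potentials give the net currents n/2, n(n-2)/(2n-3) and
   (n-2)/2 for k = 0, 1, 2, and these are pairwise distinct.  So a measurement set S,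
   viewed as a graph on the n vertices, solves the problem iff the overlaps |e ∩ p|,
   p ∈ S, determine the edge e.  Such a graph has at most one isolated vertex and no
   edge between two leaves, and if some vertex is isolated then every vertex of degree 2
   lies on an edge whose endpoints both have degree at least 2; degree counting then
   yields 3|S| >= 2n.  Conversely, a forest of stars with at least two leaves each
   separates the edges, and grouping the vertices into triples gives one with
   n - ⌊n/3⌋ = ⌈2n/3⌉ edges. *)

Local Open Scope ring_scope.

Section Potentials.

Variables (R : realFieldType) (n : nat) (adj : rel 'I_n) (r s : 'I_n).
Hypothesis neq_rs : r != s.
(* A one-step maximum principle: a maximum outside {r, s} sees r or s. *)
Hypothesis adj_rs : forall v, v != r -> v != s -> adj v r || adj v s.

Lemma harmonic_le0 (d : 'I_n -> R) : d r = 0 -> d s = 0 ->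
    (forall v, v != r -> v != s -> \sum_(u | adj v u) (d v - d u) = 0) ->
  forall v, d v <= 0.
Proof.
move=> dr ds harm v.
have [m _ max_m] := @arg_maxP _ _ _ r xpredT d isT.
apply: le_trans (max_m v isT) _; rewrite leNgt; apply/negP => dm_gt0.
have mr : m != r by apply: contraTneq dm_gt0 => ->; rewrite dr ltxx.
have ms : m != s by apply: contraTneq dm_gt0 => ->; rewrite ds ltxx.
have flow_ge0 u : adj m u -> 0 <= d m - d u by rewrite subr_ge0 => _; apply: max_m.
have flow0 := psumr_eq0P flow_ge0 (harm m mr ms).
by case/orP: (adj_rs mr ms) => /flow0/eqP;
  rewrite ?dr ?ds subr0 (gt_eqF dm_gt0).
Qed.

Lemma potential_le (phi psi : 'I_n -> R) :
  is_potential adj r s phi -> is_potential adj r s psi -> forall v, phi v <= psi v.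
Proof.
move=> [phir phis phiK] [psir psis psiK] v; rewrite -subr_le0.
apply: (@harmonic_le0 (fun v => phi v - psi v)) => [||u ur us].
- by rewrite phir psir subrr.
- by rewrite phis psis subrr.
rewrite (eq_bigr (fun w => (phi u - phi w) - (psi u - psi w))) => [|w _]; last by ring.
by rewrite sumrB phiK // psiK // subrr.
Qed.

Lemma potential_unique (phi psi : 'I_n -> R) :
  is_potential adj r s phi -> is_potential adj r s psi -> phi =1 psi.
Proof.
by move=> phiP psiP v; apply/le_anti; rewrite !(potential_le phiP psiP, potential_le psiP phiP).
Qed.

Lemma eff_resE (phi : 'I_n -> R) :
  is_potential adj r s phi -> eff_res R adj r s = (net_current adj r phi)^-1.
Proof.
move=> phiP; rewrite /eff_res (negbTE neq_rs).
have psiP := epsilon_spec (inhabits (fun=> 0)) _ (ex_intro _ phi phiP).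
congr (_^-1); apply: eq_bigr => u _.
by rewrite !(potential_unique phiP psiP).
Qed.

End Potentials.

Lemma is_potential_eq2 (R : realFieldType) n (adj adj' : rel 'I_n) r s (phi : 'I_n -> R) :
  adj =2 adj' -> is_potential adj r s phi -> is_potential adj' r s phi.
Proof.
move=> eq_adj [phir phis phiK]; split=> // v vr vs.
by rewrite -(eq_bigl _ _ (eq_adj v)) phiK.
Qed.

Lemma net_current_eq2 (R : realFieldType) n (adj adj' : rel 'I_n) r (phi : 'I_n -> R) :
  adj =2 adj' -> net_current adj r phi = net_current adj' r phi.
Proof. by move=> eq_adj; rewrite /net_current; apply: eq_bigl => u; rewrite /= eq_adj. Qed.

Section CompleteGraphMinusEdge.

Variables (R : realFieldType) (n : nat).
Implicit Types (a b r s v : 'I_n) (phi : 'I_n -> R).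

Lemma Kn_minusC a b : Kn_minus (a, b) =2 Kn_minus (b, a).
Proof.
by move=> u v; rewrite /Kn_minus !xpair_eqE orbC; congr (_ && ~~ (_ || _)); apply: andbC.
Qed.

Lemma Kn_minus_adj_rs a b r s : r != s ->
  forall v, v != r -> v != s -> Kn_minus (a, b) v r || Kn_minus (a, b) v s.
Proof.
move=> rs v vr vs; rewrite /Kn_minus !xpair_eqE vr vs /= -negb_and.
apply/negP => /andP[]; do 2 case/orP => /andP[/eqP ? /eqP ?]; subst;
  by rewrite ?eqxx in rs vr vs.
Qed.

Lemma sum_Kn_minus a b v (g : 'I_n -> R) : a != b ->
  \sum_(u | Kn_minus (a, b) v u) g u =
  \sum_u g u - g v - (if v == a then g b else if v == b then g a else 0).
Proof.
move=> ab; rewrite [\sum_u g u](bigD1 v) //= [g v + _]addrC addrK.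
have adjE u : Kn_minus (a, b) v u =
    (u != v) && ~~ ((v == a) && (u == b) || (v == b) && (u == a)).
  rewrite /Kn_minus !xpair_eqE eq_sym (eq_sym a v) (eq_sym b u) (eq_sym a u) (eq_sym b v).
  by rewrite [(u == a) && _]andbC.
rewrite (eq_bigl _ _ adjE); have [->|va] := eqVneq v a.
  rewrite [X in _ = X - _](bigD1 b) 1?eq_sym //= [g b + _]addrC addrK.
  by apply: eq_bigl => u; rewrite (eq_sym b a) (negbTE ab) orbF.
have [->|vb] := eqVneq v b.
  rewrite [X in _ = X - _](bigD1 a) //= [g a + _]addrC addrK.
  by apply: eq_bigl.
by rewrite subr0; apply: eq_bigl => u; rewrite /= andbT.
Qed.

Lemma Kn_minus_flow a b v phi : a != b ->
  \sum_(u | Kn_minus (a, b) v u) (phi v - phi u) =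
  n%:R * phi v - \sum_u phi u
  - (if v == a then phi v - phi b else if v == b then phi v - phi a else 0).
Proof.
by move=> ab; rewrite sum_Kn_minus // sumrB sumr_const card_ord subrr subr0 mulr_natl.
Qed.

Definition two_level_pot r s (y : R) v : R :=
  if v == r then 1 else if v == s then 0 else y.

Definition three_level_pot r s o (x y : R) v : R :=
  if v == o then x else two_level_pot r s y v.

Lemma sum_two_level_pot r s y : r != s ->
  \sum_v two_level_pot r s y v = 1 + (n%:R - 2) * y.
Proof.
move=> rs; have potE v : two_level_pot r s y v =
    y + ((if v == r then 1 - y else 0) + (if v == s then - y else 0)).
  rewrite /two_level_pot; have [->|_] := eqVneq v r; first by rewrite (negbTE rs); ring.
  by case: eqP => _; ring.
rewrite (eq_bigr _ (fun v _ => potE v)) !big_split /= -!big_mkcond !big_pred1_eq.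
by rewrite sumr_const card_ord -mulr_natl; ring.
Qed.

Lemma sum_three_level_pot r s o x y : r != s -> o != r -> o != s ->
  \sum_v three_level_pot r s o x y v = 1 + x + (n%:R - 3) * y.
Proof.
move=> rs or os; have potE v : three_level_pot r s o x y v =
    two_level_pot r s y v + (if v == o then x - y else 0).
  rewrite /three_level_pot /two_level_pot; have [->|_] := eqVneq v o; last by rewrite addr0.
  by rewrite (negbTE or) (negbTE os); ring.
rewrite (eq_bigr _ (fun v _ => potE v)) big_split /= sum_two_level_pot //.
by rewrite -big_mkcond big_pred1_eq; ring.
Qed.

Lemma Kn_minus_pot_disjoint a b r s : a != b -> r != s ->
    a != r -> a != s -> b != r -> b != s ->
  let phi := two_level_pot r s 2^-1 in
  is_potential (Kn_minus (a, b)) r s phi /\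
  net_current (Kn_minus (a, b)) r phi = n%:R / 2.
Proof.
move=> ab rs ar as_ br bs phi.
have phi_out v : v != r -> v != s -> phi v = 2^-1.
  by move=> vr vs; rewrite /phi /two_level_pot (negbTE vr) (negbTE vs).
have phir : phi r = 1 by rewrite /phi /two_level_pot eqxx.
have phis : phi s = 0 by rewrite /phi /two_level_pot eqxx eq_sym (negbTE rs).
split; first split => // [v vr vs].
  rewrite Kn_minus_flow // sum_two_level_pot // !phi_out //.
  by case: ifP => _; [|case: ifP => _]; field.
rewrite /net_current Kn_minus_flow // sum_two_level_pot // phir.
by rewrite eq_sym (negbTE ar) eq_sym (negbTE br); field.
Qed.

Lemma Kn_minus_pot_same r s : r != s ->
  let phi := two_level_pot r s 2^-1 in
  is_potential (Kn_minus (r, s)) r s phi /\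
  net_current (Kn_minus (r, s)) r phi = (n%:R - 2) / 2.
Proof.
move=> rs phi.
have phir : phi r = 1 by rewrite /phi /two_level_pot eqxx.
have phis : phi s = 0 by rewrite /phi /two_level_pot eqxx eq_sym (negbTE rs).
split; first split => // [v vr vs].
  rewrite Kn_minus_flow // sum_two_level_pot // (negbTE vr) (negbTE vs).
  by rewrite /phi /two_level_pot (negbTE vr) (negbTE vs); field.
by rewrite /net_current Kn_minus_flow // sum_two_level_pot // eqxx phir phis; field.
Qed.

Lemma Kn_minus_pot_source r s o : (2 < n)%N -> r != s -> o != r -> o != s ->
  let N := n%:R in
  let phi := three_level_pot r s o ((N - 3) / (2 * N - 3)) ((N - 2) / (2 * N - 3)) in
  is_potential (Kn_minus (r, o)) r s phi /\
  net_current (Kn_minus (r, o)) r phi = N * (N - 2) / (2 * N - 3).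
Proof.
move=> n3 rs or os N phi.
have N3 : 3 <= N by rewrite (ler_nat R 3 n).
have ro : r != o by rewrite eq_sym.
have phir : phi r = 1 by rewrite /phi /three_level_pot /two_level_pot eq_sym (negbTE or) eqxx.
have phio : phi o = (N - 3) / (2 * N - 3) by rewrite /phi /three_level_pot eqxx.
have D : 2 * N - 3 != 0 by apply/eqP; lra.
split; first split => // [|v vr vs].
- by rewrite /phi /three_level_pot /two_level_pot eq_sym (negbTE os) eqxx eq_sym (negbTE rs).
- rewrite Kn_minus_flow // sum_three_level_pot // (negbTE vr).
  have [->|vo] := eqVneq v o; first by rewrite phio phir -/N; field.
  by rewrite /phi /three_level_pot /two_level_pot (negbTE vo) (negbTE vr) (negbTE vs) -/N; field.
by rewrite /net_current Kn_minus_flow // sum_three_level_pot // eqxx phir phio -/N; field.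
Qed.

Lemma Kn_minus_pot_sink r s o : (2 < n)%N -> r != s -> o != r -> o != s ->
  let N := n%:R in
  let phi := three_level_pot r s o (N / (2 * N - 3)) ((N - 1) / (2 * N - 3)) in
  is_potential (Kn_minus (s, o)) r s phi /\
  net_current (Kn_minus (s, o)) r phi = N * (N - 2) / (2 * N - 3).
Proof.
move=> n3 rs or os N phi.
have N3 : 3 <= N by rewrite (ler_nat R 3 n).
have so : s != o by rewrite eq_sym.
have phir : phi r = 1 by rewrite /phi /three_level_pot /two_level_pot eq_sym (negbTE or) eqxx.
have phis : phi s = 0.
  by rewrite /phi /three_level_pot /two_level_pot eq_sym (negbTE os) eqxx eq_sym (negbTE rs).
have phio : phi o = N / (2 * N - 3) by rewrite /phi /three_level_pot eqxx.
have D : 2 * N - 3 != 0 by apply/eqP; lra.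
split; first split => // [v vr vs].
  rewrite Kn_minus_flow // sum_three_level_pot // (negbTE vs).
  have [->|vo] := eqVneq v o; first by rewrite phio phis -/N; field.
  by rewrite /phi /three_level_pot /two_level_pot (negbTE vo) (negbTE vr) (negbTE vs) -/N; field.
rewrite /net_current Kn_minus_flow // sum_three_level_pot // (negbTE rs) eq_sym (negbTE or).
by rewrite phir -/N; field.
Qed.

End CompleteGraphMinusEdge.

Definition incident n (x : 'I_n) (p : 'I_n * 'I_n) : bool := (x == p.1) || (x == p.2).

Definition overlap n (e p : 'I_n * 'I_n) : nat := incident e.1 p + incident e.2 p.

(* The net current out of [r] in [K_n] minus an edge meeting [{r, s}] in [k] vertices. *)
Definition Kn_minus_current (R : realFieldType) (n k : nat) : R :=
  let N := n%:R in
  match k with 0 => N / 2 | 1 => N * (N - 2) / (2 * N - 3) | _ => (N - 2) / 2 end.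

Section EffectiveResistance.

Variables (R : realFieldType) (n : nat).
Hypothesis n_gt2 : (2 < n)%N.
Implicit Types (a b r s : 'I_n).

Lemma Kn_minus_potential a b r s : a != b -> r != s ->
  exists2 phi : 'I_n -> R, is_potential (Kn_minus (a, b)) r s phi &
    net_current (Kn_minus (a, b)) r phi = Kn_minus_current R n (overlap (a, b) (r, s)).
Proof.
move=> ab rs; rewrite /overlap /incident /=.
have swap c : (exists2 phi : 'I_n -> R, is_potential (Kn_minus (b, a)) r s phi &
                 net_current (Kn_minus (b, a)) r phi = c) ->
              exists2 phi, is_potential (Kn_minus (a, b)) r s phi &
                 net_current (Kn_minus (a, b)) r phi = c.
  case=> phi phiP <-; exists phi; first exact: is_potential_eq2 (Kn_minusC b a) phiP.
  exact: net_current_eq2 (Kn_minusC a b).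
have [ear | ar] := eqVneq a r; first subst a.
  have [ebs | bs] := eqVneq b s; first subst b.
    have [phiP cur] := Kn_minus_pot_same R rs.
    by exists (two_level_pot r s 2^-1); rewrite // cur orbT.
  have br : b != r by rewrite eq_sym.
  have [phiP cur] := Kn_minus_pot_source R n_gt2 rs br bs.
  by eexists; first exact: phiP; rewrite cur (negbTE br).
have [eas | as_] := eqVneq a s; first subst a.
  have [ebr | br] := eqVneq b r; first subst b.
    apply: swap; have [phiP cur] := Kn_minus_pot_same R rs.
    by exists (two_level_pot r s 2^-1); rewrite // cur orbT.
  have bs : b != s by rewrite eq_sym.
  have [phiP cur] := Kn_minus_pot_sink R n_gt2 rs br bs.
  by eexists; first exact: phiP; rewrite cur orbT (negbTE bs).
apply: swap; rewrite addnC.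
have [ebr | br] := eqVneq b r; first subst b.
  have [phiP cur] := Kn_minus_pot_source R n_gt2 rs ar as_.
  by eexists; first exact: phiP; rewrite cur ?orbT.
have [ebs | bs] := eqVneq b s; first subst b.
  have [phiP cur] := Kn_minus_pot_sink R n_gt2 rs ar as_.
  by eexists; first exact: phiP; rewrite cur ?orbT.
have ba : b != a by rewrite eq_sym.
have [phiP cur] := Kn_minus_pot_disjoint R ba rs br bs ar as_.
by eexists; first exact: phiP; rewrite cur ?orbT.
Qed.

Lemma eff_res_Kn_minus (e p : 'I_n * 'I_n) : e.1 != e.2 -> p.1 != p.2 ->
  eff_res R (Kn_minus e) p.1 p.2 = (Kn_minus_current R n (overlap e p))^-1.
Proof.
case: e p => [a b] [r s] /= ab rs.
have [phi phiP <-] := Kn_minus_potential ab rs.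
exact: (eff_resE rs (Kn_minus_adj_rs a b rs) phiP).
Qed.

Lemma Kn_minus_current_inj :
  {in [pred k : nat | (k <= 2)%N] &, injective (Kn_minus_current R n)}.
Proof.
have N3 : 3 <= (n%:R : R) by rewrite (ler_nat R 3 n).
have D : 2 * (n%:R : R) - 3 != 0 by apply/eqP; lra.
have two : (2 : R) != 0 by apply/eqP; lra.
case=> [|[|[|k]]]; case=> [|[|[|l]]] //= _ _; rewrite /Kn_minus_current => /eqP.
all: by rewrite eqr_div // => /eqP ?; exfalso; nra.
Qed.

End EffectiveResistance.

Lemma Kn_edge_neq n (e : 'I_n * 'I_n) : Kn_edge e -> e.1 != e.2.
Proof. by move=> lt_e; apply/negbT/ltn_eqF. Qed.

Lemma overlap_le2 n (e p : 'I_n * 'I_n) : (overlap e p <= 2)%N.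
Proof. by rewrite /overlap; case: incident; case: incident. Qed.

Definition separating n (S : {set 'I_n * 'I_n}) : Prop :=
  forall e e', Kn_edge e -> Kn_edge e' -> e != e' ->
    exists2 p, p \in S & overlap e p != overlap e' p.

Lemma solvesE (R : realFieldType) n (S : {set 'I_n * 'I_n}) : (2 < n)%N ->
  solves R S <-> (forall p, p \in S -> (p.1 < p.2)%N) /\ separating S.
Proof.
move=> n_gt2; split=> [[S_lt solS] | [S_lt sepS]]; split=> // e e' e_edge e'_edge ee'.
all: have [e_neq e'_neq] := (Kn_edge_neq e_edge, Kn_edge_neq e'_edge).
- have [p pS neq_res] := solS e e' e_edge e'_edge ee'; exists p => //.
  have p_neq := Kn_edge_neq (S_lt p pS).
  by apply: contraNneq neq_res => eq_ov; rewrite !eff_res_Kn_minus // eq_ov.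
- have [p pS neq_ov] := sepS e e' e_edge e'_edge ee'; exists p => //.
  have p_neq := Kn_edge_neq (S_lt p pS).
  apply: contraNneq neq_ov; rewrite !eff_res_Kn_minus // => /invr_inj.
  by move/Kn_minus_current_inj => -> //; rewrite inE overlap_le2.
Qed.

Local Close Scope ring_scope.

Lemma sum_nat_bool (T : finType) (A P : pred T) :
  \sum_(i | A i) P i = #|[set i | A i && P i]|.
Proof. by rewrite -sum1dep_card big_mkcondr /=; apply: eq_bigr => i _; case: (P i). Qed.

Lemma incident_fst n (p : 'I_n * 'I_n) : incident p.1 p. Proof. by rewrite /incident eqxx. Qed.

Lemma incident_snd n (p : 'I_n * 'I_n) : incident p.2 p. Proof. by rewrite /incident eqxx orbT. Qed.

Lemma incident_pair n (p : 'I_n * 'I_n) x y : x != y -> incident x p -> incident y p ->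
  forall z, incident z p = (z == x) || (z == y).
Proof.
case: p => a b; rewrite /incident /= => xy.
move=> /orP[]/eqP ? /orP[]/eqP ? z; subst; rewrite ?eqxx // in xy; exact: orbC.
Qed.

Lemma exists_other n (p : 'I_n * 'I_n) w : p.1 != p.2 -> exists2 u, u != w & incident u p.
Proof.
move=> p12; have [p1w | p1w] := eqVneq p.1 w; last by exists p.1; rewrite ?incident_fst.
by exists p.2; rewrite ?incident_snd // -p1w eq_sym.
Qed.

Lemma incident_addn n (x : 'I_n) p : p.1 != p.2 ->
  incident x p = (x == p.1) + (x == p.2) :> nat.
Proof. by rewrite /incident => p12; case: eqP => [->|]; rewrite ?(negbTE p12). Qed.

Lemma overlapC n (e p : 'I_n * 'I_n) : e.1 != e.2 -> p.1 != p.2 -> overlap e p = overlap p e.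
Proof.
case: e p => [a b] [x y] ab xy; rewrite /overlap !incident_addn //=.
by rewrite (eq_sym x a) (eq_sym x b) (eq_sym y a) (eq_sym y b); lia.
Qed.

Definition deg n (S : {set 'I_n * 'I_n}) (x : 'I_n) : nat := #|[set p in S | incident x p]|.

Section Degrees.

Variables (n : nat) (S : {set 'I_n * 'I_n}).
Implicit Types (x y : 'I_n) (p q : 'I_n * 'I_n).

Lemma deg_sum x : deg S x = \sum_(p in S) incident x p.
Proof. by rewrite sum_nat_bool. Qed.

Lemma sum_overlap e : \sum_(p in S) overlap e p = deg S e.1 + deg S e.2.
Proof. by rewrite !deg_sum -big_split. Qed.

Lemma deg_gt0 x p : p \in S -> incident x p -> 0 < deg S x.
Proof. by move=> pS xp; apply/card_gt0P; exists p; rewrite inE pS xp. Qed.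

Lemma deg0_incident x p : deg S x = 0 -> p \in S -> incident x p = false.
Proof. by move=> dx pS; apply: contra_eqF dx => xp; rewrite -lt0n (deg_gt0 pS). Qed.

Lemma deg1_incident x p q : deg S x = 1 -> p \in S -> incident x p ->
  q \in S -> incident x q = (q == p).
Proof.
move=> dx pS xp qS; apply/idP/eqP => [xq | ->] //.
have /card_le1_eqP : #|[set p in S | incident x p]| <= 1 by rewrite -/(deg S x) dx.
by apply; rewrite inE ?qS ?xq ?pS ?xp.
Qed.

Lemma handshake (w : 'I_n -> nat) : (forall p, p \in S -> p.1 != p.2) ->
  \sum_x w x * deg S x = \sum_(p in S) (w p.1 + w p.2).
Proof.
move=> S_neq; under eq_bigr do rewrite deg_sum big_distrr /=.
rewrite exchange_big; apply: eq_bigr => p pS /=.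
rewrite (bigD1 p.1) // (bigD1 p.2) /=; last by rewrite eq_sym S_neq.
rewrite incident_fst incident_snd !muln1 big1 ?addn0 // => x /andP[x1 x2].
by rewrite /incident (negbTE x1) (negbTE x2) muln0.
Qed.

End Degrees.

Section Pairs.

Variable n : nat.
Implicit Types (x y z : 'I_n) (e p : 'I_n * 'I_n).

Definition edge_of x y : 'I_n * 'I_n := if (x < y)%N then (x, y) else (y, x).

Lemma Kn_edge_edge_of x y : x != y -> Kn_edge (edge_of x y).
Proof. by rewrite /edge_of /Kn_edge neq_ltn; case: ltnP. Qed.

Lemma incident_edge_of z x y : incident z (edge_of x y) = incident z (x, y).
Proof. by rewrite /edge_of /incident; case: ifP => //= _; rewrite orbC. Qed.

Lemma overlap_edge_of x y p : overlap (edge_of x y) p = overlap (x, y) p.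
Proof. by rewrite /edge_of /overlap; case: ifP => //= _; rewrite addnC. Qed.

Lemma Kn_edge_inj e e' : Kn_edge e -> Kn_edge e' ->
  (forall z, incident z e = incident z e') -> e = e'.
Proof.
case: e e' => [a b] [a' b']; rewrite /Kn_edge /= => ab ab' eq_inc.
have := eq_inc a; have := eq_inc b; have := eq_inc a'; have := eq_inc b'.
rewrite /incident /= !eqxx ?orbT /=.
move=> /orP[]/eqP e1 /orP[]/eqP e2 /esym/orP[]/eqP e3 /esym/orP[]/eqP e4; subst => //.
all: lia.
Qed.

Lemma separating_pair (S : {set 'I_n * 'I_n}) x y x' y' z : separating S ->
    x != y -> x' != y' -> incident z (x, y) != incident z (x', y') ->
  exists2 p, p \in S & overlap (x, y) p != overlap (x', y') p.
Proof.
move=> sepS xy xy' z_xy.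
have : edge_of x y != edge_of x' y'.
  by apply: contraNneq z_xy => eq_e; rewrite -!(incident_edge_of z) eq_e.
case/(sepS _ _ (Kn_edge_edge_of xy) (Kn_edge_edge_of xy')) => p pS.
by exists p; rewrite // -!overlap_edge_of.
Qed.

End Pairs.

Section LowerBound.

Variables (n : nat) (S : {set 'I_n * 'I_n}).
Hypothesis n_gt2 : 2 < n.
Hypothesis S_neq : forall p, p \in S -> p.1 != p.2.
Hypothesis S_sep : separating S.
Implicit Types (x y u w : 'I_n) (p q : 'I_n * 'I_n).

Local Notation d := (deg S).

Definition heavy p := (1 < d p.1) && (1 < d p.2).

Lemma heavyE p x y : x != y -> incident x p -> incident y p ->
  heavy p = (1 < d x) && (1 < d y).
Proof.
case: p => a b; rewrite /heavy /incident /= => xy.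
move=> /orP[]/eqP ? /orP[]/eqP ?; subst; rewrite ?eqxx // in xy; exact: andbC.
Qed.

Lemma separating_vertices x y : x != y ->
  exists2 p, p \in S & incident x p != incident y p.
Proof.
move=> xy; have : 0 < #|~: [set x; y]| by rewrite cardsCs setCK card_ord cards2 xy; lia.
case/card_gt0P => z; rewrite !inE negb_or => /andP[zx zy].
have [xz yz] : x != z /\ y != z by rewrite !(eq_sym _ z).
have [|p pS neq_ov] := @separating_pair _ S x z y z x S_sep xz yz.
  by rewrite /incident /= eqxx (negbTE xy) (negbTE xz).
by exists p => //; move: neq_ov; apply: contra_neq => xy_p; rewrite /overlap /= xy_p.
Qed.

Lemma isolated_uniq x y : d x = 0 -> d y = 0 -> x = y.
Proof.
move=> dx dy; apply/eqP/negP => /negP/separating_vertices[p pS].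
by rewrite (deg0_incident dx pS) (deg0_incident dy pS).
Qed.

Lemma leaves_not_adjacent p : p \in S -> d p.1 = 1 -> d p.2 = 1 -> False.
Proof.
move=> pS d1 d2; have [q qS] := separating_vertices (S_neq pS).
by rewrite (deg1_incident d1 pS (incident_fst p) qS) (deg1_incident d2 pS (incident_snd p) qS) eqxx.
Qed.

Lemma deg2_heavy x w : d x = 0 -> d w = 2 ->
  exists2 p, p \in S & incident w p && heavy p.
Proof.
move=> dx dw; apply/exists_inP/contraT; rewrite negb_exists_in => /forall_inP light.
have /cards2P[p1 [p2 [p12 Ew]]] : #|[set p in S | incident w p]| == 2 by rewrite -/(d w) dw.
have at_w q : q \in S -> incident w q = (q == p1) || (q == p2).
  by move=> qS; move/setP/(_ q): Ew; rewrite !inE qS.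
have [p1S wp1] : p1 \in S /\ incident w p1.
  by apply/andP; move/setP/(_ p1): Ew; rewrite !inE eqxx => ->.
have [p2S wp2] : p2 \in S /\ incident w p2.
  by apply/andP; move/setP/(_ p2): Ew; rewrite !inE eqxx orbT => ->.
have leaf p : p \in S -> incident w p -> exists2 u, u != w & incident u p && (d u == 1).
  move=> pS wp; have [u uw up] := exists_other w (S_neq pS); exists u => //.
  have := light p pS; rewrite wp (heavyE (p := p) uw) // dw /= up.
  by have := deg_gt0 pS up; case: (d u) => [|[|]].
have [u1 u1w /andP[u1p1 /eqP du1]] := leaf p1 p1S wp1.
have [u2 u2w /andP[u2p2 /eqP du2]] := leaf p2 p2S wp2.
have u12 : u1 != u2.
  by apply: contraNneq p12 => eq_u; rewrite eq_sym -(deg1_incident du1 p1S u1p1 p2S) eq_u.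
have u1x : u1 != x by apply/eqP => u1x; move: du1; rewrite u1x dx.
(* Both [{u1, u2}] and [{w, x}] meet exactly the measurements [p1] and [p2], once each. *)
have [||q qS] := @separating_pair _ S u1 u2 w x u1 S_sep u12.
  by apply/eqP => wx; move: dw; rewrite wx dx.
  by rewrite /incident /= eqxx (negbTE u1w) (negbTE u1x).
rewrite /overlap /= (deg1_incident du1 p1S u1p1 qS) (deg1_incident du2 p2S u2p2 qS).
rewrite at_w // (deg0_incident dx qS) addn0.
by have [->|] := eqVneq q p1; rewrite ?eqxx ?(negbTE p12) //; case: (q == p2).
Qed.

Lemma card_separating_ge : 5 < n -> 2 * n <= 3 * #|S|.
Proof.
move=> n_gt5.
set nI := \sum_x (d x == 0); set nL := \sum_x (d x == 1); set nM := \sum_x (1 < d x).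
set D := \sum_x (d x - 2); set H := [set p in S | heavy p].
have vertices : n = nI + nL + nM.
  by rewrite -{1}[n]card_ord -sum1_card -!big_split; apply: eq_bigr => x _ /=; lia.
have edges : 2 * #|S| = D + nL + 2 * nM.
  have -> : 2 * #|S| = \sum_x 1 * d x by rewrite (handshake (fun=> 1)) // sum_nat_const mulnC.
  by rewrite big_distrr -!big_split; apply: eq_bigr => x _ /=; lia.
have light_edges : #|S| = nL + #|H|.
  have -> : nL = \sum_x (d x == 1) * d x.
    by apply: eq_bigr => x _; case: eqP => [->|].
  rewrite handshake // -sum1_card -sum_nat_bool -big_split /=.
  apply: eq_bigr => p pS; have := leaves_not_adjacent pS.
  have := deg_gt0 pS (incident_fst p); have := deg_gt0 pS (incident_snd p).
  rewrite /heavy; case: (d p.1) => [|[|a]]; case: (d p.2) => [|[|b]] //= _ _.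
  by move/(_ erefl erefl).
have isolated_le1 : nI <= 1.
  rewrite /nI sum_nat_bool; apply/card_le1_eqP => x y; rewrite !inE => /eqP dx /eqP dy.
  exact: isolated_uniq.
have heavy_cover : 0 < nI -> nM <= D + 2 * #|H|.
  rewrite /nI sum_nat_bool => /card_gt0P[x]; rewrite !inE => /eqP dx.
  have H_neq p : p \in H -> p.1 != p.2 by rewrite inE => /andP[/S_neq].
  have -> : 2 * #|H| = \sum_x 1 * deg H x by rewrite (handshake (fun=> 1)) // sum_nat_const mulnC.
  rewrite -big_split; apply: leq_sum => w _; rewrite mul1n.
  have [dw2 | dw2] := eqVneq (d w) 2; last by case: (d w) dw2 => [|[|[|k]]].
  have [p pS /andP[wp hp]] := deg2_heavy dx dw2.
  by rewrite dw2 (@deg_gt0 _ H w p) // inE pS hp.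
(* Together: [3 * #|S| + 2 * nI = 2 * n + D + #|H|]. *)
by case: (posnP nI) => [|/heavy_cover]; lia.
Qed.

End LowerBound.

Section StarForest.

Variables (n : nat) (c : 'I_n -> 'I_n).
Hypothesis c_idem : forall v, c (c v) = c v.
Hypothesis two_leaves : forall z, c z = z ->
  exists l1 l2, [/\ l1 != l2, l1 != z, l2 != z, c l1 = z & c l2 = z].
Implicit Types (v x z : 'I_n) (e p : 'I_n * 'I_n).

Definition star_forest : {set 'I_n * 'I_n} := [set (c v, v) | v in [set v | c v != v]].

Local Notation S := star_forest.

Lemma star_forest_neq p : p \in S -> p.1 != p.2.
Proof. by case/imsetP => v; rewrite inE => cv ->. Qed.

Lemma deg_leaf v : c v != v -> deg S v = 1.
Proof.
move=> cv; rewrite /deg (_ : [set p in S | incident v p] = [set (c v, v)]) ?cards1 //.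
apply/setP => p; rewrite !inE.
apply/andP/eqP => [[/imsetP[w]] | ->]; last first.
  by split; [apply/imsetP; exists v; rewrite ?inE | exact: (incident_snd (c v, v))].
rewrite inE => cw -> /orP[]/eqP /= vw; last by rewrite vw.
by move: cv; rewrite vw c_idem eqxx.
Qed.

Lemma deg_center z : c z = z -> 1 < deg S z.
Proof.
move=> cz; have [l1 [l2 [l12 l1z l2z cl1 cl2]]] := two_leaves cz.
have leafS l : c l = z -> l != z -> (z, l) \in S.
  by move=> cl lz; apply/imsetP; exists l; rewrite ?inE cl // eq_sym.
apply: leq_trans (subset_leq_card (_ : [set (z, l1); (z, l2)] \subset _)).
  by rewrite cards2 xpair_eqE eqxx l12.
by apply/subsetP => p; rewrite !inE => /orP[]/eqP->; rewrite leafS // /incident eqxx.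
Qed.

Lemma deg_star_gt0 x : 0 < deg S x.
Proof. by have [/deg_center|/deg_leaf->] := eqVneq (c x) x; first exact: ltnW. Qed.

Lemma star_center_incident e e' z : e.1 != e.2 ->
    (forall v, c v != v -> incident v e + incident (c v) e = incident v e' + incident (c v) e') ->
    deg S e.1 + deg S e.2 = deg S e'.1 + deg S e'.2 ->
  c z = z -> incident z e' -> incident z e.
Proof.
move=> e12 same_leaf same_deg cz ze'; apply: contraT => ze.
(* Otherwise both ends of [e] are leaves of [z], so [e] has degree sum 2, while [e']
   contains the centre [z] and has degree sum at least 3. *)
have [l1 [l2 [l12 l1z l2z cl1 cl2]]] := two_leaves cz.
have leaf_in_e l : c l = z -> l != z -> incident l e.
  move=> cl lz; have := same_leaf l; rewrite cl (negbTE ze) ze' eq_sym lz.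
  by move/(_ isT); case: (incident l e); case: (incident l e').
have e_leaf x : incident x e -> deg S x = 1.
  rewrite (incident_pair l12 (leaf_in_e l1 cl1 l1z) (leaf_in_e l2 cl2 l2z) x).
  by case/orP => /eqP->; apply: deg_leaf; rewrite ?cl1 ?cl2 eq_sym.
have := deg_center cz; have := deg_star_gt0 e'.1; have := deg_star_gt0 e'.2.
move: same_deg; rewrite (e_leaf _ (incident_fst e)) (e_leaf _ (incident_snd e)).
by case/orP: ze' => /eqP <- ? ? ? ?; exfalso; lia.
Qed.

Lemma star_forest_separating : separating S.
Proof.
move=> e e' e_edge e'_edge ee'; apply/exists_inP/contraT.
rewrite negb_exists_in => /forall_inP /= same.
have [e12 e'12] := (Kn_edge_neq e_edge, Kn_edge_neq e'_edge).
have same_leaf v : c v != v ->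
    incident v e + incident (c v) e = incident v e' + incident (c v) e'.
  move=> cv; have pS : (c v, v) \in S by apply/imsetP; exists v; rewrite ?inE.
  have := same _ pS; rewrite negbK => /eqP.
  have pS12 := star_forest_neq pS.
  by rewrite (overlapC e12 pS12) (overlapC e'12 pS12) /overlap addnC [RHS]addnC.
have same_deg : deg S e.1 + deg S e.2 = deg S e'.1 + deg S e'.2.
  by rewrite -!sum_overlap; apply: eq_bigr => p /same; rewrite negbK => /eqP.
have same_center z : c z = z -> incident z e = incident z e'.
  move=> cz; apply/idP/idP; last exact: star_center_incident.
  by apply: star_center_incident => // v /same_leaf.
case/eqP: ee'; apply: Kn_edge_inj => // x.
have [cx | cx] := eqVneq (c x) x; first exact: same_center.
move: (same_leaf x cx); rewrite (same_center (c x)) ?c_idem // => /addIn.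
by case: (incident x e); case: (incident x e').
Qed.

End StarForest.

Section TripleStars.

Variable n : nat.
Hypothesis n_gt2 : 2 < n.
Implicit Types v z : 'I_n.

(* The centre of [v] is [3 * (v %/ 3)], except that the last triple also takes the
   [n %% 3] leftover vertices. *)
Definition triple_center v : 'I_n := insubd v (3 * minn (v %/ 3) (n %/ 3 - 1)).

Lemma triple_centerE v : triple_center v = 3 * minn (v %/ 3) (n %/ 3 - 1) :> nat.
Proof. by rewrite /= val_insubd; case: ifPn => // /negP; lia. Qed.

Lemma triple_center_idem v : triple_center (triple_center v) = triple_center v.
Proof. by apply: val_inj => /=; rewrite !triple_centerE; lia. Qed.

Lemma triple_center_leaves z : triple_center z = z ->
  exists l1 l2, [/\ l1 != l2, l1 != z, l2 != z, triple_center l1 = z & triple_center l2 = z].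
Proof.
move/(congr1 val) => /=; rewrite triple_centerE => zE.
have l1_lt : z.+1 < n by lia.
have l2_lt : z.+2 < n by lia.
exists (Ordinal l1_lt), (Ordinal l2_lt).
by split; rewrite -?val_eqE /=; try (apply: val_inj => /=; rewrite triple_centerE /=); lia.
Qed.

Lemma triple_forest_lt p : p \in star_forest triple_center -> p.1 < p.2.
Proof.
case/imsetP => v; rewrite inE -val_eqE /= triple_centerE => cv -> /=.
by move: cv; rewrite triple_centerE; lia.
Qed.

Lemma card_triple_forest : #|star_forest triple_center| <= n - n %/ 3.
Proof.
apply: leq_trans (leq_imset_card _ _) _.
set C := [set v | triple_center v == v].
have lt3 (j : 'I_(n %/ 3)) : 3 * j < n by have := ltn_ord j; lia.
have C_ge : n %/ 3 <= #|C|.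
  have f_inj : injective (fun j => Ordinal (lt3 j)).
    by move=> i j /(congr1 val) /= eq_ij; apply: val_inj => /=; lia.
  rewrite -[n %/ 3]card_ord -(card_imset _ f_inj); apply: subset_leq_card.
  apply/subsetP => _ /imsetP[j _ ->]; rewrite inE; apply/eqP/val_inj.
  by rewrite /= triple_centerE /=; have := ltn_ord j; lia.
have := cardsC C; rewrite card_ord.
have -> : ~: C = [set v | triple_center v != v] by apply/setP => v; rewrite !inE.
lia.
Qed.

End TripleStars.

Theorem theorem2p1 (R : realFieldType) (n : nat) :
  (6 <= n)%N ->
  (exists S : {set 'I_n * 'I_n}, solves R S /\ #|S| = ((2 * n).+2 %/ 3)%N) /\
  (forall S : {set 'I_n * 'I_n}, solves R S -> ((2 * n).+2 %/ 3 <= #|S|)%N).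
Proof.
move=> n_ge6; have n_gt2 : 2 < n by lia.
have card_ge (S : {set 'I_n * 'I_n}) : solves R S -> 2 * n <= 3 * #|S|.
  move/(solvesE _ _ n_gt2) => [S_lt S_sep].
  by apply: card_separating_ge => // p /S_lt /Kn_edge_neq.
split=> [|S /card_ge]; last by lia.
set S := star_forest (@triple_center n).
have S_solves : solves R S.
  apply/solvesE => //; split; first exact: triple_forest_lt.
  apply: star_forest_separating; [exact: triple_center_idem | exact: triple_center_leaves].
exists S; split=> //.
by have := card_ge _ S_solves; have := card_triple_forest n_gt2; rewrite -/S; lia.
Qed.
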